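(* Let $y>0$ and $\mu_0\in(-1,0)$. If $x>0$ and $$x\ge L_{\mu_0}(y)=\frac{\sqrt{(y-\mu_0-2)^2+4y}-y-\mu_0}{2y},$$ then $Q_\mu(x,y)>0$ for all $\mu\ge\mu_0$.
   Context: For real $\mu$, $x>0$, $y\ge 0$: $Q_{\mu}(x,y)=x^{\frac12(1-\mu)}\int_y^{\infty} t^{\frac12(\mu-1)}e^{-t-x}I_{\mu-1}(2\sqrt{xt})\,dt$, where $I_\nu$ is the modified Bessel function of the first kind. *)

From Stdlib Require Import Reals Arith.
From Coquelicot Require Import Coquelicot.
Open Scope R_scope.

Definition Gamma_pos (s : R) : R :=
  RInt_gen (fun t => Rpower t (s - 1) * exp (- t)) (at_right 0) (Rbar_locally p_infty).

Fixpoint rising (s : R) (n : nat) : R :=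
  match n with
  | O => 1
  | S k => rising s k * (s + INR k)
  end.

(* Reciprocal Gamma function 1/Gamma(s) on all of R (entire; zero at
   s = 0, -1, -2, ...), via 1/Gamma(s) = s(s+1)...(s+n-1)/Gamma(s+n)
   with n chosen so that s + n > 0. *)
Definition rgamma (s : R) : R :=
  let n := Z.to_nat (up (- s)) in
  rising s n / Gamma_pos (s + INR n).

Definition BesselI (nu z : R) : R :=
  Rpower (z / 2) nu *
  Series (fun k => (z / 2) ^ (2 * k) / INR (Factorial.fact k) * rgamma (INR k + nu + 1)).

Definition MarcumQ (mu x y : R) : R :=
  Rpower x ((1 - mu) / 2) *
  RInt_gen (fun t => Rpower t ((mu - 1) / 2) * exp (- t - x)
                     * BesselI (mu - 1) (2 * sqrt (x * t)))
           (at_point y) (Rbar_locally p_infty).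

Definition L_bound (mu0 y : R) : R :=
  (sqrt ((y - mu0 - 2) ^ 2 + 4 * y) - y - mu0) / (2 * y).

(* With [w = x t] and [1 / Gamma] the entire reciprocal Gamma function, the integrand of
   [Q_mu(x, y)] is [x^((mu-1)/2) e^(-x)] times [t^(mu-1) e^(-t) P(x t)], where
   [P(w) = sum_k w^k / (k! Gamma(k + mu))].  For [k >= 1] the coefficients are positive since
   [k + mu > 0], and the first two terms add up to [(mu + w) / Gamma(mu + 1)], which is
   nonnegative once [w >= -mu].  The hypothesis [x >= L_mu0(y)] gives [x y >= -mu0 >= -mu], so
   the integrand is positive on [[y, +oo)].  Its partial integrals are bounded by [e^x]: term by
   term [int t^(k+mu-1) e^(-t) <= Gamma(k + mu)], and the tail of [P] is uniformly small on
   compact intervals.  So the improper integral converges, and [Q_mu(x, y)] is [e^(-x)] times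
   its (positive) value. *)

From Stdlib Require Import Reals Lra Lia Classical.
From Coquelicot Require Import Coquelicot.
Open Scope R_scope.

Lemma RInt_le_RInt_subinterval (g : R -> R) a c d b :
  a <= c -> c <= d -> d <= b ->
  (forall u v, a <= u <= b -> a <= v <= b -> ex_RInt g u v) ->
  (forall t, a <= t <= b -> 0 <= g t) ->
  RInt g c d <= RInt g a b.
Proof.
  intros hac hcd hdb Hex Hpos.
  rewrite <- (RInt_Chasles g a c b), <- (RInt_Chasles g c d b) by (apply Hex; lra).
  assert (0 <= RInt g a c) by (apply RInt_ge_0; [lra | apply Hex; lra | intros; apply Hpos; lra]).
  assert (0 <= RInt g d b) by (apply RInt_ge_0; [lra | apply Hex; lra | intros; apply Hpos; lra]).
  change plus with Rplus. lra.
Qed.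

Lemma is_lub_approx (E : R -> Prop) l eps :
  is_lub E l -> 0 < eps -> exists v, E v /\ l - eps < v.
Proof.
  intros [Hub Hleast] Heps. apply NNPP; intros Hnone.
  enough (Hbound : is_upper_bound E (l - eps)) by (specialize (Hleast _ Hbound); lra).
  intros v Hv. destruct (Rle_lt_dec v (l - eps)) as [Hle | Hlt]; [exact Hle |].
  exfalso; apply Hnone; exists v; auto.
Qed.

(* The lower endpoint ranges over an up-closed
   domain [D], and [F] must eventually lie in [D] below any point of [D]: e.g. [at_right 0]
   with [D = (0, +oo)], or [at_point y] with [D = [y, +oo)]. *)
Lemma is_RInt_gen_of_bounded_nonneg (F : (R -> Prop) -> Prop) (D : R -> Prop)
    (g : R -> R) (u0 M : R) :
  D u0 ->
  (forall u v, D u -> u <= v -> D v) ->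
  (forall u, D u -> F (fun a => D a /\ a <= u)) ->
  (forall t, D t -> 0 <= g t) ->
  (forall u v, D u -> D v -> ex_RInt g u v) ->
  (forall u v, D u -> u <= v -> RInt g u v <= M) ->
  exists l, is_RInt_gen g F (Rbar_locally p_infty) l /\
            forall u v, D u -> u <= v -> RInt g u v <= l.
Proof.
  intros Du0 Dup Fbelow Hpos Hex HM.
  set (E := fun r => exists u v, D u /\ u <= v /\ r = RInt g u v).
  assert (HE : bound E) by (exists M; intros r (u & v & Du & Huv & ->); auto).
  destruct (completeness E HE) as [l Hl]; [exists (RInt g u0 u0), u0, u0; auto with real |].
  assert (Hle : forall u v, D u -> u <= v -> RInt g u v <= l)
    by (intros u v Du Huv; apply (proj1 Hl); exists u, v; auto).
  exists l; split; [| exact Hle].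
  intros P [eps HP].
  destruct (is_lub_approx E l eps Hl (cond_pos eps)) as (r & (u & v & Du & Huv & ->) & Hr).
  apply (Filter_prod _ _ _ _ (fun b => v < b) (Fbelow u Du)); [exists v; auto |].
  intros a b [Da Hau] Hvb; simpl.
  assert (Hab : forall w w', a <= w <= b -> a <= w' <= b -> ex_RInt g w w')
    by (intros w w' Hw Hw'; apply Hex; apply Dup with a; tauto).
  exists (RInt g a b); split; [apply (@RInt_correct R_CompleteNormedModule), Hab; lra |].
  apply HP; change (Rabs (RInt g a b - l) < eps); apply Rabs_lt_between.
  assert (RInt g u v <= RInt g a b).
  { apply RInt_le_RInt_subinterval; auto; try lra.
    intros t Ht; apply Hpos, Dup with a; tauto. }
  assert (RInt g a b <= l) by (apply Hle; auto; lra).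
  lra.
Qed.

Lemma ex_RInt_of_continuous (f : R -> R) a b :
  (forall z, Rmin a b <= z <= Rmax a b -> continuous f z) -> ex_RInt f a b.
Proof. apply (@ex_RInt_continuous R_CompleteNormedModule). Qed.

Lemma exp_le_exp_of_le a b : a <= b -> exp a <= exp b.
Proof.
  intros Hab; destruct (Rle_lt_or_eq_dec a b Hab) as [Hlt | ->];
    [left; apply exp_increasing |]; lra.
Qed.

Lemma ln_le_sub_1 z : 0 < z -> ln z <= z - 1.
Proof. intros Hz; pose proof (exp_ineq1_le (ln z)) as H; rewrite exp_ln in H; lra. Qed.

Lemma continuous_Rpower_base p t : 0 < t -> continuous (fun t => Rpower t p) t.
Proof.
  intros Ht; apply (@ex_derive_continuous R_AbsRing R_NormedModule).
  unfold Rpower; auto_derive; lra.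
Qed.

Definition gamma_integrand (s t : R) : R := Rpower t (s - 1) * exp (- t).

Lemma gamma_integrand_continuous s t : 0 < t -> continuous (gamma_integrand s) t.
Proof.
  intros Ht; apply (@ex_derive_continuous R_AbsRing R_NormedModule).
  unfold gamma_integrand, Rpower; auto_derive; lra.
Qed.

Lemma gamma_integrand_pos s t : 0 < t -> 0 < gamma_integrand s t.
Proof. intros; unfold gamma_integrand, Rpower; apply Rmult_lt_0_compat; apply exp_pos. Qed.

Lemma ex_RInt_gamma_integrand s u v : 0 < u -> 0 < v -> ex_RInt (gamma_integrand s) u v.
Proof.
  intros Hu Hv; apply ex_RInt_of_continuous; intros z Hz; apply gamma_integrand_continuous.
  assert (0 < Rmin u v) by (apply Rmin_glb_lt; auto); lra.
Qed.

(* Near [0] the factor [exp (- t)] is dropped and [t ^ (s - 1)] is integrated exactly. *)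
Lemma RInt_gamma_integrand_to_1_le s u : 0 < s -> 0 < u <= 1 ->
  RInt (gamma_integrand s) u 1 <= 1 / s.
Proof.
  intros Hs Hu.
  assert (Hprim : is_RInt (fun t => Rpower t (s - 1)) u 1 (1 / s - Rpower u s / s)).
  { replace (1 / s) with (Rpower 1 s / s)
      by (unfold Rpower; rewrite ln_1, Rmult_0_r, exp_0; reflexivity).
    apply (@is_RInt_derive R_CompleteNormedModule (fun t => Rpower t s / s));
      intros t Ht; rewrite Rmin_left in Ht by lra.
    - unfold Rpower; auto_derive; [lra |].
      replace ((s - 1) * ln t) with (s * ln t + - ln t) by ring.
      rewrite exp_plus, exp_Ropp, exp_ln by lra; field; lra.
    - apply continuous_Rpower_base; lra. }
  apply Rle_trans with (RInt (fun t => Rpower t (s - 1)) u 1).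
  - apply RInt_le; [lra | apply ex_RInt_gamma_integrand; lra | eexists; exact Hprim |].
    intros t Ht; unfold gamma_integrand.
    rewrite <- (Rmult_1_r (Rpower t (s - 1))) at 2.
    apply Rmult_le_compat_l; [unfold Rpower; left; apply exp_pos |].
    rewrite <- exp_0; apply exp_le_exp_of_le; lra.
  - rewrite (is_RInt_unique _ _ _ _ Hprim).
    assert (0 < Rpower u s / s) by (apply Rdiv_lt_0_compat; [apply exp_pos | lra]); lra.
Qed.

(* [t ^ (s - 1)] grows slower than [exp (t / 2)]: take [c = |s - 1| + 1] in
   [ln (t / 2c) <= t / 2c - 1]. *)
Lemma gamma_integrand_le_exp_half s :
  exists C, forall t, 1 <= t -> gamma_integrand s t <= exp C * exp (- t / 2).
Proof.
  set (c := Rabs (s - 1) + 1).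
  assert (Hc : 0 < c) by (unfold c; pose proof (Rabs_pos (s - 1)); lra).
  exists (c * ln (2 * c) - c); intros t Ht.
  unfold gamma_integrand, Rpower; rewrite <- !exp_plus; apply exp_le_exp_of_le.
  assert (Hlnt : 0 <= ln t) by (rewrite <- ln_1; apply ln_le; lra).
  assert ((s - 1) * ln t <= c * ln t)
    by (apply Rmult_le_compat_r; [| unfold c; pose proof (Rle_abs (s - 1))]; lra).
  assert (Hln : ln t - ln (2 * c) <= t / (2 * c) - 1)
    by (rewrite <- ln_div by lra; apply ln_le_sub_1, Rdiv_lt_0_compat; lra).
  assert (c * (ln t - ln (2 * c)) <= c * (t / (2 * c) - 1)) by (apply Rmult_le_compat_l; lra).
  assert (c * (t / (2 * c) - 1) = t / 2 - c) by (field; lra).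
  nra.
Qed.

Lemma RInt_gamma_integrand_from_1_bounded s :
  exists K, forall v, 1 <= v -> RInt (gamma_integrand s) 1 v <= K.
Proof.
  destruct (gamma_integrand_le_exp_half s) as [C HC].
  set (prim := fun t => - 2 * exp C * exp (- t / 2)).
  exists (2 * exp C); intros v Hv.
  assert (Hprim : is_RInt (fun t => exp C * exp (- t / 2)) 1 v (prim v - prim 1)).
  { apply (@is_RInt_derive R_CompleteNormedModule prim); intros t _; unfold prim.
    - auto_derive; [auto | unfold Rdiv; field].
    - apply (@ex_derive_continuous R_AbsRing R_NormedModule); auto_derive; auto. }
  apply Rle_trans with (RInt (fun t => exp C * exp (- t / 2)) 1 v).
  - apply RInt_le; [lra | apply ex_RInt_gamma_integrand; lra | eexists; exact Hprim |].
    intros t Ht; apply HC; lra.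
  - rewrite (is_RInt_unique _ _ _ _ Hprim); unfold prim; cbv beta.
    pose proof (exp_pos (- v / 2)); pose proof (exp_pos C).
    assert (exp (- (1) / 2) <= 1) by (rewrite <- exp_0 at 2; apply exp_le_exp_of_le; lra).
    nra.
Qed.

Lemma RInt_gamma_integrand_bounded s : 0 < s ->
  exists M, forall u v, 0 < u -> u <= v -> RInt (gamma_integrand s) u v <= M.
Proof.
  intros Hs; destruct (RInt_gamma_integrand_from_1_bounded s) as [K HK].
  exists (1 / s + K); intros u v Hu Huv.
  assert (0 < Rmin u 1) by (apply Rmin_glb_lt; lra).
  pose proof (Rmin_r u 1); pose proof (Rmin_l u 1).
  pose proof (Rmax_r v 1); pose proof (Rmax_l v 1).
  apply Rle_trans with (RInt (gamma_integrand s) (Rmin u 1) (Rmax v 1)).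
  - apply RInt_le_RInt_subinterval; try lra.
    + intros; apply ex_RInt_gamma_integrand; lra.
    + intros; left; apply gamma_integrand_pos; lra.
  - rewrite <- (RInt_Chasles _ (Rmin u 1) 1) by (apply ex_RInt_gamma_integrand; lra).
    pose proof (RInt_gamma_integrand_to_1_le s (Rmin u 1) Hs ltac:(lra)).
    pose proof (HK (Rmax v 1) ltac:(lra)).
    change plus with Rplus; lra.
Qed.

Lemma RInt_gamma_integrand_le_Gamma_pos s : 0 < s ->
  forall u v, 0 < u -> u <= v -> RInt (gamma_integrand s) u v <= Gamma_pos s.
Proof.
  intros Hs; destruct (RInt_gamma_integrand_bounded s Hs) as [M HM].
  destruct (is_RInt_gen_of_bounded_nonneg (at_right 0) (fun t => 0 < t)
              (gamma_integrand s) 1 M) as (l & Hl & Hle); [lra | intros; lra | | | | exact HM |].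
  - intros u Hu; exists (mkposreal u Hu); intros a Ha Ha0.
    change (Rabs (a - 0) < u) in Ha; apply Rabs_lt_between in Ha; lra.
  - intros t Ht; left; apply gamma_integrand_pos, Ht.
  - intros u v Hu Hv; apply ex_RInt_gamma_integrand; auto.
  - replace (Gamma_pos s) with l; [exact Hle |].
    symmetry; unfold Gamma_pos; apply (@is_RInt_gen_unique R_CompleteNormedModule); [| | exact Hl].
    + apply Proper_StrongProper, at_right_proper_filter.
    + apply Proper_StrongProper, Rbar_locally_filter.
Qed.

(* On [[1, 2]] the integrand is at least [exp (-2) / 2], whatever [s > 0]. *)
Lemma Gamma_pos_ge s : 0 < s -> exp (-2) / 2 <= Gamma_pos s.
Proof.
  intros Hs.
  apply Rle_trans with (RInt (gamma_integrand s) 1 2);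
    [| apply RInt_gamma_integrand_le_Gamma_pos; lra].
  apply Rle_trans with (RInt (fun _ => exp (-2) / 2) 1 2).
  - rewrite RInt_const; unfold scal; simpl; unfold mult; simpl; lra.
  - apply RInt_le; [lra | apply ex_RInt_const | apply ex_RInt_gamma_integrand; lra |].
    intros t Ht; unfold gamma_integrand, Rpower.
    assert (exp (-2) <= exp (- t)) by (apply exp_le_exp_of_le; lra).
    assert (/ 2 <= exp ((s - 1) * ln t)).
    { assert (0 <= ln t) by (rewrite <- ln_1; apply ln_le; lra).
      assert (ln t <= ln 2) by (apply ln_le; lra).
      replace (/ 2) with (exp (- ln 2)) by (rewrite exp_Ropp, exp_ln; lra).
      apply exp_le_exp_of_le; nra. }
    pose proof (exp_pos (-2)); nra.
Qed.

Lemma Gamma_pos_gt0 s : 0 < s -> 0 < Gamma_pos s.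
Proof. intros Hs; pose proof (Gamma_pos_ge s Hs); pose proof (exp_pos (-2)); lra. Qed.

Lemma rgamma_of_pos s : 0 < s -> rgamma s = / Gamma_pos s.
Proof.
  intros Hs; unfold rgamma; destruct (archimed (- s)) as [Hup Hup'].
  replace (Z.to_nat (up (- s))) with 0%nat.
  - simpl; rewrite Rplus_0_r; unfold Rdiv; ring.
  - assert (IZR (up (- s)) < 1) as Hlt by lra; apply lt_IZR in Hlt; lia.
Qed.

Lemma rgamma_of_nonpos s : -1 < s <= 0 -> rgamma s = s / Gamma_pos (s + 1).
Proof.
  intros Hs; unfold rgamma; destruct (archimed (- s)) as [Hup Hup'].
  replace (up (- s)) with 1%Z; [simpl; f_equal; ring |].
  assert (IZR (up (- s)) < 2) as Hlt by lra; apply lt_IZR in Hlt.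
  assert (0 < IZR (up (- s))) as Hgt by lra; apply lt_IZR in Hgt; lia.
Qed.

Lemma Series_nonneg (a : nat -> R) : (forall n, 0 <= a n) -> ex_series a -> 0 <= Series a.
Proof.
  intros Hpos Hex.
  rewrite <- (Rmult_0_l (Series (fun _ : nat => 0))), <- Series_scal_l.
  apply Series_le; [intros n; rewrite Rmult_0_l; split; [lra | apply Hpos] | exact Hex].
Qed.

Lemma Series_tail_small (a : nat -> R) eps : ex_series a -> 0 < eps ->
  exists N, Rabs (Series (fun k => a (S N + k)%nat)) < eps.
Proof.
  intros Hex Heps.
  destruct (Series_correct _ Hex (ball (Series a) eps)) as [N HN];
    [exists (mkposreal eps Heps); auto |].
  exists N; specialize (HN N (le_n N)).
  change (Rabs (sum_n a N - Series a) < eps) in HN; rewrite sum_n_Reals in HN.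
  rewrite (Series_incr_n a (S N)) in HN by (auto with arith); simpl pred in HN.
  rewrite <- Rabs_Ropp.
  replace (- _) with (sum_f_R0 a N - (sum_f_R0 a N + Series (fun k => a (S N + k)%nat))) by ring.
  exact HN.
Qed.

(* The [k]-th coefficient of [I_(mu-1)(2 sqrt w) = w^((mu-1)/2) * sum_k c_k w^k], written
   exactly as it occurs in [BesselI]. *)
Definition besselI_coef (mu : R) (k : nat) : R :=
  rgamma (INR k + (mu - 1) + 1) / INR (Factorial.fact k).

Lemma besselI_coef_of_pos mu k : 0 < INR k + mu ->
  besselI_coef mu k = / (INR (Factorial.fact k) * Gamma_pos (INR k + mu)).
Proof.
  intros Hk; unfold besselI_coef.
  replace (INR k + (mu - 1) + 1) with (INR k + mu) by ring.
  rewrite rgamma_of_pos by exact Hk.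
  pose proof (INR_fact_lt_0 k); pose proof (Gamma_pos_gt0 _ Hk).
  field; lra.
Qed.

Lemma INR_S_plus_pos k mu : -1 < mu -> 0 < INR (S k) + mu.
Proof. intros Hmu; rewrite S_INR; pose proof (pos_INR k); lra. Qed.

Lemma besselI_coef_pos mu k : 0 < INR k + mu -> 0 < besselI_coef mu k.
Proof.
  intros Hk; rewrite besselI_coef_of_pos by exact Hk.
  pose proof (INR_fact_lt_0 k); pose proof (Gamma_pos_gt0 _ Hk).
  apply Rinv_0_lt_compat, Rmult_lt_0_compat; assumption.
Qed.

Lemma besselI_coef_S_pos mu k : -1 < mu -> 0 < besselI_coef mu (S k).
Proof. intros Hmu; apply besselI_coef_pos, INR_S_plus_pos, Hmu. Qed.

Lemma besselI_coef_0_of_nonpos mu : -1 < mu <= 0 ->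
  besselI_coef mu 0 = mu / Gamma_pos (mu + 1).
Proof.
  intros Hmu; unfold besselI_coef; simpl.
  replace (0 + (mu - 1) + 1) with mu by ring.
  rewrite rgamma_of_nonpos by exact Hmu; field.
  pose proof (Gamma_pos_gt0 (mu + 1) ltac:(lra)); lra.
Qed.

(* The lower bound on [Gamma_pos] makes [|c_k| k!] uniformly bounded. *)
Lemma besselI_coef_abs_le mu k : -1 < mu ->
  Rabs (besselI_coef mu k) <= (Rabs (rgamma mu) + 2 * exp 2) / INR (Factorial.fact k).
Proof.
  intros Hmu; pose proof (INR_fact_lt_0 k); pose proof (exp_pos 2).
  destruct k as [| k].
  - unfold besselI_coef; simpl; replace (0 + (mu - 1) + 1) with mu by ring.
    rewrite Rabs_div, Rabs_R1 by lra; unfold Rdiv; rewrite Rinv_1; lra.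
  - pose proof (INR_S_plus_pos k mu Hmu) as Hk.
    pose proof (Gamma_pos_ge _ Hk); pose proof (Gamma_pos_gt0 _ Hk).
    rewrite Rabs_pos_eq by (left; apply besselI_coef_S_pos, Hmu).
    rewrite besselI_coef_of_pos, Rinv_mult by exact Hk.
    assert (/ Gamma_pos (INR (S k) + mu) <= 2 * exp 2).
    { apply Rmult_le_reg_l with (Gamma_pos (INR (S k) + mu)); [lra |].
      rewrite Rinv_r by lra.
      assert (exp (-2) * exp 2 = 1) by (rewrite <- exp_plus, <- exp_0; f_equal; ring).
      nra. }
    assert (0 < / INR (Factorial.fact (S k))) by (apply Rinv_0_lt_compat; lra).
    pose proof (Rabs_pos (rgamma mu)); unfold Rdiv; nra.
Qed.

Lemma besselI_coef_radius mu w : -1 < mu -> Rbar_lt (Rabs w) (CV_radius (besselI_coef mu)).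
Proof.
  intros Hmu; set (r := Rabs w + 1); set (A := Rabs (rgamma mu) + 2 * exp 2).
  assert (Hr : 0 <= r) by (unfold r; pose proof (Rabs_pos w); lra).
  assert (Hdisk : CV_disk (besselI_coef mu) r).
  { apply (@ex_series_le R_AbsRing R_CompleteNormedModule)
      with (fun n => A * (r ^ n * / INR (Factorial.fact n))).
    - intros n; change norm with Rabs; simpl.
      rewrite Rabs_Rabsolu, Rabs_mult, (Rabs_pos_eq (r ^ n)) by (apply pow_le, Hr).
      pose proof (besselI_coef_abs_le mu n Hmu) as Hc; pose proof (pow_le r n Hr).
      unfold Rdiv in Hc; fold A in Hc; nra.
    - apply (@ex_series_scal_l R_AbsRing R_NormedModule); exists (exp r); apply is_exp_Reals. }
  apply Rbar_lt_le_trans with r; [simpl; unfold r; lra |].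
  apply (proj1 (Lub_Rbar_correct (CV_disk (besselI_coef mu)))), Hdisk.
Qed.

Lemma ex_series_besselI mu w : -1 < mu -> ex_series (fun k => besselI_coef mu k * w ^ k).
Proof.
  intros Hmu.
  apply (@ex_series_ext R_AbsRing R_NormedModule)
    with (2 := CV_radius_inside _ w (besselI_coef_radius mu w Hmu)).
  intros n; rewrite pow_n_pow; unfold scal; simpl; unfold mult; simpl; ring.
Qed.

Lemma besselI_coef_0_1_nonneg mu w : -1 < mu -> 0 <= w -> (0 < mu \/ - mu <= w) ->
  0 <= besselI_coef mu 0 + besselI_coef mu 1 * w.
Proof.
  intros Hmu Hw Hcase.
  pose proof (besselI_coef_S_pos mu 0 Hmu) as Hc1.
  destruct (Rlt_or_le 0 mu) as [Hpos | Hnonpos].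
  - assert (0 < besselI_coef mu 0) by (apply besselI_coef_pos; simpl; lra).
    nra.
  - rewrite besselI_coef_0_of_nonpos, besselI_coef_of_pos by (simpl; lra); simpl.
    pose proof (Gamma_pos_gt0 (mu + 1) ltac:(lra)).
    replace (1 + mu) with (mu + 1) by ring.
    replace (mu / Gamma_pos (mu + 1) + / (1 * Gamma_pos (mu + 1)) * w)
      with ((mu + w) / Gamma_pos (mu + 1)) by (field; lra).
    apply Rdiv_le_0_compat; [destruct Hcase |]; lra.
Qed.

Lemma PSeries_besselI_pos mu w : -1 < mu -> 0 < w -> (0 < mu \/ - mu <= w) ->
  0 < PSeries (besselI_coef mu) w.
Proof.
  intros Hmu Hw Hcase; unfold PSeries.
  pose proof (ex_series_besselI mu w Hmu) as Hex.
  rewrite (Series_incr_n _ 3) by (auto with arith); simpl pred.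
  assert (0 <= Series (fun k => besselI_coef mu (3 + k) * w ^ (3 + k))).
  { apply Series_nonneg; [| apply (ex_series_incr_n (fun k => besselI_coef mu k * w ^ k) 3), Hex].
    intros n; apply Rmult_le_pos; [left; apply besselI_coef_S_pos, Hmu | apply pow_le; lra]. }
  pose proof (besselI_coef_0_1_nonneg mu w Hmu ltac:(lra) Hcase).
  pose proof (besselI_coef_S_pos mu 1 Hmu).
  assert (0 < besselI_coef mu 2 * w ^ 2) by (apply Rmult_lt_0_compat; [lra | apply pow_lt, Hw]).
  simpl in *; lra.
Qed.

Lemma PSeries_besselI_continuous mu w : -1 < mu -> continuous (PSeries (besselI_coef mu)) w.
Proof. intros Hmu; apply continuity_pt_filterlim, PSeries_continuity, besselI_coef_radius, Hmu. Qed.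

Definition besselI_tail (mu : R) (N : nat) (w : R) : R :=
  Series (fun k => besselI_coef mu (S N + k) * w ^ (S N + k)).

Lemma PSeries_besselI_split mu N w : -1 < mu ->
  PSeries (besselI_coef mu) w
  = sum_f_R0 (fun k => besselI_coef mu k * w ^ k) N + besselI_tail mu N w.
Proof.
  intros Hmu; unfold PSeries, besselI_tail.
  rewrite (Series_incr_n _ (S N)) by (auto with arith || apply ex_series_besselI, Hmu).
  reflexivity.
Qed.

Lemma besselI_tail_nonneg mu N w : -1 < mu -> 0 <= w -> 0 <= besselI_tail mu N w.
Proof.
  intros Hmu Hw; apply Series_nonneg.
  - intros n; apply Rmult_le_pos; [left; apply besselI_coef_S_pos, Hmu | apply pow_le, Hw].
  - apply (ex_series_incr_n (fun k => besselI_coef mu k * w ^ k)), ex_series_besselI, Hmu.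
Qed.

Lemma besselI_tail_le mu N w w' : -1 < mu -> 0 <= w <= w' ->
  besselI_tail mu N w <= besselI_tail mu N w'.
Proof.
  intros Hmu Hw; apply Series_le.
  - intros n; change (S N + n)%nat with (S (N + n)).
    pose proof (besselI_coef_S_pos mu (N + n) Hmu); split.
    + apply Rmult_le_pos; [lra | apply pow_le; lra].
    + apply Rmult_le_compat_l; [lra | apply pow_incr; lra].
  - apply (ex_series_incr_n (fun k => besselI_coef mu k * w' ^ k)), ex_series_besselI, Hmu.
Qed.

Lemma besselI_tail_small mu w eps : -1 < mu -> 0 < eps -> exists N, besselI_tail mu N w < eps.
Proof.
  intros Hmu Heps.
  destruct (Series_tail_small _ eps (ex_series_besselI mu w Hmu) Heps) as [N HN].
  exists N; eapply Rle_lt_trans; [apply Rle_abs | exact HN].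
Qed.

Lemma exp_ge_sum_f_R0 x n : 0 <= x ->
  sum_f_R0 (fun k => x ^ k / INR (Factorial.fact k)) n <= exp x.
Proof.
  intros Hx.
  assert (Hexp : is_series (fun k => x ^ k * / INR (Factorial.fact k)) (exp x))
    by exact (is_exp_Reals x).
  rewrite <- (is_series_unique _ _ Hexp), (Series_incr_n _ (S n))
    by (auto with arith || eexists; exact Hexp).
  assert (0 <= Series (fun k => x ^ (S n + k) * / INR (Factorial.fact (S n + k)))).
  { apply Series_nonneg.
    - intros k; apply Rmult_le_pos;
        [apply pow_le, Hx | left; apply Rinv_0_lt_compat, INR_fact_lt_0].
    - apply (ex_series_incr_n (fun k => x ^ k * / INR (Factorial.fact k))); eexists; exact Hexp. }
  simpl pred; unfold Rdiv; lra.
Qed.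

Lemma gamma_integrand_mul_pow s k t : 0 < t ->
  gamma_integrand s t * t ^ k = gamma_integrand (INR k + s) t.
Proof.
  intros Ht; unfold gamma_integrand.
  replace (INR k + s - 1) with (INR k + (s - 1)) by ring.
  rewrite Rpower_plus, Rpower_pow by exact Ht; ring.
Qed.

(* For [k + mu > 0] this is [c_k Gamma(k + mu) = 1 / k!]; the only other case is [k = 0],
   [mu <= 0], where [c_0 <= 0]. *)
Lemma besselI_coef_mul_RInt_le mu k y b : -1 < mu -> 0 < y -> y <= b ->
  besselI_coef mu k * RInt (gamma_integrand (INR k + mu)) y b <= / INR (Factorial.fact k).
Proof.
  intros Hmu Hy Hb.
  assert (HI : 0 <= RInt (gamma_integrand (INR k + mu)) y b).
  { apply RInt_ge_0; [exact Hb | apply ex_RInt_gamma_integrand; lra |].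
    intros t Ht; left; apply gamma_integrand_pos; lra. }
  destruct (Rlt_or_le 0 (INR k + mu)) as [Hk | Hk].
  - rewrite besselI_coef_of_pos, Rinv_mult by exact Hk.
    pose proof (RInt_gamma_integrand_le_Gamma_pos _ Hk y b Hy Hb).
    pose proof (Gamma_pos_gt0 _ Hk); pose proof (INR_fact_lt_0 k).
    assert (0 < / INR (Factorial.fact k)) by (apply Rinv_0_lt_compat; lra).
    apply Rle_trans
      with (/ INR (Factorial.fact k) * / Gamma_pos (INR k + mu) * Gamma_pos (INR k + mu)).
    + apply Rmult_le_compat_l; [left; apply Rmult_lt_0_compat, Rinv_0_lt_compat |]; lra.
    + right; field; lra.
  - destruct k as [| k]; [| pose proof (INR_S_plus_pos k mu Hmu); lra].
    simpl in Hk, HI |- *; rewrite besselI_coef_0_of_nonpos by lra.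
    pose proof (Gamma_pos_gt0 (mu + 1) ltac:(lra)) as HG.
    assert (mu / Gamma_pos (mu + 1) <= 0) by (unfold Rdiv; pose proof (Rinv_0_lt_compat _ HG); nra).
    rewrite Rinv_1; nra.
Qed.

Definition besselI_partial (mu x : R) (N : nat) (t : R) : R :=
  gamma_integrand mu t * sum_f_R0 (fun k => besselI_coef mu k * (x * t) ^ k) N.

Lemma RInt_besselI_term_le mu x y b k : -1 < mu -> 0 < x -> 0 < y -> y <= b ->
  ex_RInt (fun t => gamma_integrand mu t * (besselI_coef mu k * (x * t) ^ k)) y b /\
  RInt (fun t => gamma_integrand mu t * (besselI_coef mu k * (x * t) ^ k)) y b
  <= x ^ k / INR (Factorial.fact k).
Proof.
  intros Hmu Hx Hy Hb.
  assert (Hext : forall t, Rmin y b < t < Rmax y b ->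
            scal (besselI_coef mu k * x ^ k) (gamma_integrand (INR k + mu) t)
            = gamma_integrand mu t * (besselI_coef mu k * (x * t) ^ k)).
  { intros t Ht; rewrite Rmin_left in Ht by exact Hb.
    rewrite <- gamma_integrand_mul_pow by lra.
    unfold scal; simpl; unfold mult; simpl; rewrite Rpow_mult_distr; ring. }
  assert (Hg : ex_RInt (gamma_integrand (INR k + mu)) y b) by (apply ex_RInt_gamma_integrand; lra).
  split.
  - eapply (@ex_RInt_ext R_NormedModule); [exact Hext | apply (@ex_RInt_scal R_NormedModule), Hg].
  - rewrite <- (RInt_ext _ _ _ _ Hext), (@RInt_scal R_CompleteNormedModule) by exact Hg.
    unfold scal; simpl; unfold mult; simpl.
    replace (besselI_coef mu k * x ^ k * _)
      with (x ^ k * (besselI_coef mu k * RInt (gamma_integrand (INR k + mu)) y b)) by ring.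
    apply Rmult_le_compat_l; [apply pow_le; lra | apply besselI_coef_mul_RInt_le; assumption].
Qed.

Lemma RInt_besselI_partial_le mu x y b N : -1 < mu -> 0 < x -> 0 < y -> y <= b ->
  ex_RInt (besselI_partial mu x N) y b /\
  RInt (besselI_partial mu x N) y b <= sum_f_R0 (fun k => x ^ k / INR (Factorial.fact k)) N.
Proof.
  intros Hmu Hx Hy Hb; induction N as [| N [Hex HIN]].
  - exact (RInt_besselI_term_le mu x y b 0 Hmu Hx Hy Hb).
  - destruct (RInt_besselI_term_le mu x y b (S N) Hmu Hx Hy Hb) as [Hex' HI'].
    assert (Hsplit : forall t, plus (besselI_partial mu x N t)
              (gamma_integrand mu t * (besselI_coef mu (S N) * (x * t) ^ S N))
              = besselI_partial mu x (S N) t)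
      by (intros t; unfold besselI_partial, plus; simpl; ring).
    split.
    + eapply (@ex_RInt_ext R_NormedModule); [intros t _; apply Hsplit |].
      apply (@ex_RInt_plus R_NormedModule); assumption.
    + rewrite <- (RInt_ext _ _ _ _ (fun t _ => Hsplit t)),
        (@RInt_plus R_CompleteNormedModule) by assumption.
      rewrite tech5; change plus with Rplus; lra.
Qed.

Definition marcum_density (mu x t : R) : R :=
  gamma_integrand mu t * PSeries (besselI_coef mu) (x * t).

Lemma marcum_density_continuous mu x t : -1 < mu -> 0 < t -> continuous (marcum_density mu x) t.
Proof.
  intros Hmu Ht; apply (continuous_mult (gamma_integrand mu));
    [apply gamma_integrand_continuous, Ht |].
  apply (continuous_comp (fun t => x * t)); [| apply PSeries_besselI_continuous, Hmu].
  apply (@ex_derive_continuous R_AbsRing R_NormedModule); auto_derive; trivial.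
Qed.

Lemma ex_RInt_marcum_density mu x u v : -1 < mu -> 0 < u -> 0 < v ->
  ex_RInt (marcum_density mu x) u v.
Proof.
  intros Hmu Hu Hv; apply ex_RInt_of_continuous; intros z Hz.
  apply marcum_density_continuous; [exact Hmu |].
  assert (0 < Rmin u v) by (apply Rmin_glb_lt; assumption); lra.
Qed.

Lemma marcum_density_pos mu x t : -1 < mu -> 0 < x -> 0 < t -> (0 < mu \/ - mu <= x * t) ->
  0 < marcum_density mu x t.
Proof.
  intros Hmu Hx Ht Hcase; apply Rmult_lt_0_compat; [apply gamma_integrand_pos, Ht |].
  apply PSeries_besselI_pos; [| apply Rmult_lt_0_compat |]; assumption.
Qed.

Lemma marcum_density_le_partial mu x N t b : -1 < mu -> 0 < x -> 0 < t <= b ->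
  marcum_density mu x t
  <= besselI_partial mu x N t + besselI_tail mu N (x * b) * gamma_integrand mu t.
Proof.
  intros Hmu Hx Ht; unfold marcum_density, besselI_partial.
  rewrite (PSeries_besselI_split mu N (x * t) Hmu).
  pose proof (besselI_tail_le mu N (x * t) (x * b) Hmu ltac:(split; nra)).
  pose proof (gamma_integrand_pos mu t ltac:(lra)).
  nra.
Qed.

(* Integrating the partial sums term by term bounds them by the partial sums of [exp x];
   the tail is uniformly small on [[y, b]] because it increases with its argument. *)
Lemma RInt_marcum_density_le mu x y b : -1 < mu -> 0 < x -> 0 < y -> y <= b ->
  RInt (marcum_density mu x) y b <= exp x.
Proof.
  intros Hmu Hx Hy Hb; apply Rle_plus_epsilon; intros eps Heps.
  set (I0 := RInt (gamma_integrand mu) y b).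
  assert (Hg : ex_RInt (gamma_integrand mu) y b) by (apply ex_RInt_gamma_integrand; lra).
  assert (HI0 : 0 <= I0).
  { apply RInt_ge_0; [exact Hb | exact Hg |]; intros t Ht; left; apply gamma_integrand_pos; lra. }
  destruct (besselI_tail_small mu (x * b) (eps / (I0 + 1)) Hmu ltac:(apply Rdiv_lt_0_compat; lra))
    as [N HN].
  set (T := besselI_tail mu N (x * b)) in HN.
  assert (HT : 0 <= T) by (apply besselI_tail_nonneg; nra).
  destruct (RInt_besselI_partial_le mu x y b N Hmu Hx Hy Hb) as [Hex HIN].
  assert (Hex' : ex_RInt (fun t => scal T (gamma_integrand mu t)) y b)
    by (apply (@ex_RInt_scal R_NormedModule), Hg).
  apply Rle_trans
    with (RInt (fun t => plus (besselI_partial mu x N t) (scal T (gamma_integrand mu t))) y b).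
  { apply RInt_le; [exact Hb | apply ex_RInt_marcum_density; lra |
                    apply (@ex_RInt_plus R_NormedModule); assumption |].
    intros t Ht; apply marcum_density_le_partial; [assumption | assumption | lra]. }
  rewrite (@RInt_plus R_CompleteNormedModule), (@RInt_scal R_CompleteNormedModule) by assumption.
  change (RInt (besselI_partial mu x N) y b + T * I0 <= exp x + eps).
  pose proof (exp_ge_sum_f_R0 x N ltac:(lra)).
  apply (Rmult_lt_compat_r (I0 + 1)) in HN; [| lra].
  unfold Rdiv in HN; rewrite Rmult_assoc, Rinv_l, Rmult_1_r in HN by lra.
  nra.
Qed.

Lemma is_RInt_gen_marcum_density mu x y : -1 < mu -> 0 < x -> 0 < y -> (0 < mu \/ - mu <= x * y) ->
  exists l, 0 < l /\ is_RInt_gen (marcum_density mu x) (at_point y) (Rbar_locally p_infty) l.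
Proof.
  intros Hmu Hx Hy Hcase.
  assert (Hpos : forall t, y <= t -> 0 < marcum_density mu x t).
  { intros t Ht; apply marcum_density_pos; try assumption; [lra |].
    destruct Hcase; [left | right; nra]; assumption. }
  destruct (is_RInt_gen_of_bounded_nonneg (at_point y) (fun t => y <= t)
              (marcum_density mu x) y (exp x)) as (l & Hl & Hle).
  - lra.
  - intros u v Hu Huv; lra.
  - intros u Hu; split; lra.
  - intros t Ht; left; apply Hpos, Ht.
  - intros u v Hu Hv; apply ex_RInt_marcum_density; lra.
  - intros u v Hu Huv; apply RInt_marcum_density_le; lra.
  - exists l; split; [| exact Hl].
    apply Rlt_le_trans with (RInt (marcum_density mu x) y (y + 1)); [| apply Hle; lra].
    apply RInt_gt_0; [lra | intros t Ht; apply Hpos; lra |].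
    intros t Ht; apply marcum_density_continuous; lra.
Qed.

Lemma marcumQ_integrand_eq mu x t : 0 < x -> 0 < t ->
  Rpower t ((mu - 1) / 2) * exp (- t - x) * BesselI (mu - 1) (2 * sqrt (x * t))
  = Rpower x ((mu - 1) / 2) * exp (- x) * marcum_density mu x t.
Proof.
  intros Hx Ht; assert (Hxt : 0 < x * t) by nra.
  unfold BesselI, marcum_density.
  replace (2 * sqrt (x * t) / 2) with (sqrt (x * t)) by field.
  replace (Series _) with (PSeries (besselI_coef mu) (x * t)).
  2: { apply Series_ext; intros k.
       rewrite pow_mult, pow2_sqrt by lra; unfold besselI_coef, Rdiv; ring. }
  rewrite <- (Rpower_sqrt (x * t)), Rpower_mult by exact Hxt.
  unfold gamma_integrand, Rpower; rewrite ln_mult by assumption.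
  rewrite <- !Rmult_assoc, <- !exp_plus.
  f_equal; f_equal; field.
Qed.

Lemma MarcumQ_eq mu x y l : 0 < x -> 0 < y ->
  is_RInt_gen (marcum_density mu x) (at_point y) (Rbar_locally p_infty) l ->
  MarcumQ mu x y = exp (- x) * l.
Proof.
  intros Hx Hy Hl.
  assert (Hscal : is_RInt_gen
            (fun t => Rpower t ((mu - 1) / 2) * exp (- t - x) * BesselI (mu - 1) (2 * sqrt (x * t)))
            (at_point y) (Rbar_locally p_infty) (scal (Rpower x ((mu - 1) / 2) * exp (- x)) l)).
  { assert (Fy : Filter (at_point y)) by apply (@filter_filter _ _ (at_point_filter y)).
    assert (Finf : Filter (Rbar_locally p_infty))
      by apply (@filter_filter _ _ (Rbar_locally_filter p_infty)).
    apply (@is_RInt_gen_ext R_NormedModule _ _ Fy Finf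
             (fun t => scal (Rpower x ((mu - 1) / 2) * exp (- x)) (marcum_density mu x t)));
      [| apply (@is_RInt_gen_scal R_NormedModule _ _ Fy Finf), Hl].
    apply (Filter_prod _ _ _ (fun a => a = y) (fun b => y < b)); [reflexivity | exists y; auto |].
    intros a b -> Hb t Ht; simpl in Ht; rewrite Rmin_left, Rmax_right in Ht by lra.
    symmetry; apply marcumQ_integrand_eq; lra. }
  unfold MarcumQ; rewrite (is_RInt_gen_unique _ _ Hscal).
  unfold scal; simpl; unfold mult; simpl.
  replace (Rpower x ((1 - mu) / 2) * (Rpower x ((mu - 1) / 2) * exp (- x) * l))
    with (Rpower x ((1 - mu) / 2 + (mu - 1) / 2) * exp (- x) * l) by (rewrite Rpower_plus; ring).
  replace ((1 - mu) / 2 + (mu - 1) / 2) with 0 by field.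
  rewrite Rpower_O by exact Hx; ring.
Qed.

(* Since [mu0 > -1], the square root in [L_bound] is at least [y - mu0]. *)
Lemma opp_le_mul_of_L_bound_le y mu0 x : 0 < y -> -1 < mu0 -> L_bound mu0 y <= x -> - mu0 <= x * y.
Proof.
  intros Hy Hmu0 HL; unfold L_bound in HL.
  assert (Hsqrt : y - mu0 <= sqrt ((y - mu0 - 2) ^ 2 + 4 * y)).
  { destruct (Rle_or_lt 0 (y - mu0)) as [Hnn | Hneg];
      [| pose proof (sqrt_pos ((y - mu0 - 2) ^ 2 + 4 * y)); lra].
    rewrite <- (sqrt_pow2 (y - mu0)) at 1 by exact Hnn.
    apply sqrt_le_1_alt; nra. }
  apply (Rmult_le_compat_r (2 * y)) in HL; [| lra].
  unfold Rdiv in HL; rewrite Rmult_assoc, Rinv_l, Rmult_1_r in HL by lra.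
  lra.
Qed.

Theorem corollary1 (y mu0 x : R) :
  0 < y -> -1 < mu0 < 0 -> 0 < x -> L_bound mu0 y <= x ->
  forall mu : R, mu0 <= mu -> 0 < MarcumQ mu x y.
Proof.
  intros Hy Hmu0 Hx HL mu Hmu.
  pose proof (opp_le_mul_of_L_bound_le y mu0 x Hy ltac:(lra) HL) as Hxy.
  assert (Hcase : 0 < mu \/ - mu <= x * y) by (destruct (Rlt_or_le 0 mu); [left | right]; lra).
  destruct (is_RInt_gen_marcum_density mu x y ltac:(lra) Hx Hy Hcase) as (l & Hl & Hint).
  rewrite (MarcumQ_eq mu x y l Hx Hy Hint).
  apply Rmult_lt_0_compat; [apply exp_pos | exact Hl].
Qed.
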